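(* Fix $\lambda>0$ and an initial $\boldsymbol\alpha^{(0)}\in\mathbb R^{2nK}_{\ge0}$. Assume a solver is available that returns the optimal solution of the sub-problem $\max_{\boldsymbol\alpha\ge\mathbf0}D^{\mathcal F}_\lambda(\boldsymbol\alpha)$ (equivalently of $\min_{\mathbf m_{\mathcal F}\ge\mathbf0}P^{\mathcal F}_\lambda(\mathbf m_{\mathcal F})$) for any given $\mathcal F\subseteq[p]$. Consider the working set method: for $t=1,2,\dots$, set $\mathcal W_t=\{k\in[p]:\mathbf C_{k,:}\boldsymbol\alpha^{(t-1)}>\lambda\}$ and let $\boldsymbol\alpha^{(t)}$ be the optimal solution of the sub-problem with $\mathcal F=\mathcal W_t$. Then after finitely many steps this method returns the optimal solution of the original problem, i.e. there is a finite $T$ such that $\boldsymbol\alpha^{(T)}$ is the optimal solution of $\max_{\boldsymbol\alpha\ge\mathbf0}D_\lambda(\boldsymbol\alpha)$.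
   Context: Let $n,K,p\ge1$ be integers, $[n]=\{1,\dots,n\}$. For each $i\in[n]$ let $\mathbf x_i\in\mathbb R^p$ have nonnegative entries and let $\mathcal D_i,\mathcal S_i\subseteq[n]$ be sets of size $K$. Put $\mathbf c_{ij}=(\mathbf x_i-\mathbf x_j)\circ(\mathbf x_i-\mathbf x_j)$ (entrywise product). Vectors in $\mathbb R^{2nK}$ are indexed by the pairs $(i,l)$, $l\in\mathcal D_i$ (''different-class pairs'') and $(i,j)$, $j\in\mathcal S_i$ (''same-class pairs''). $\mathbf C\in\mathbb R^{p\times2nK}$ has column $\mathbf c_{il}$ for each different-class pair and $-\mathbf c_{ij}$ for each same-class pair; $\mathbf C_{k,:}$ is its $k$-th row. Fix $L\ge U\ge0$, $\eta>0$; let $\mathbf t\in\mathbb R^{2nK}$ have entry $L$ at different-class pairs and $-U$ at same-class pairs; $\ell_s(x)=([s-x]_+)^2$ with $[z]_+=\max\{z,0\}$ (entrywise for vectors); $\mathbf1$ is the all-ones vector; for a vector $\mathbf v\in\mathbb R^p$ and $\mathcal F\subseteq[p]$, $\mathbf v_{\mathcal F}$ is the sub-vector of entries indexed by $\mathcal F$. The original primal and dual problems are $\min_{\mathbf m\in\mathbb R^p_{\ge0}}P_\lambda(\mathbf m)$ and $\max_{\boldsymbol\alpha\in\mathbb R^{2nK}_{\ge0}}D_\lambda(\boldsymbol\alpha)$, where $$P_\lambda(\mathbf m)=\sum_{i\in[n]}\Big[\sum_{l\in\mathcal D_i}\ell_L(\mathbf m^\top\mathbf c_{il})+\sum_{j\in\mathcal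 S_i}\ell_{-U}(-\mathbf m^\top\mathbf c_{ij})\Big]+\lambda\Big(\mathbf m^\top\mathbf1+\frac\eta2\|\mathbf m\|_2^2\Big),$$ $$D_\lambda(\boldsymbol\alpha)=-\frac14\|\boldsymbol\alpha\|_2^2+\mathbf t^\top\boldsymbol\alpha-\frac{\lambda\eta}2\|\mathbf m_\lambda(\boldsymbol\alpha)\|_2^2,\qquad\mathbf m_\lambda(\boldsymbol\alpha)=\frac1{\lambda\eta}[\mathbf C\boldsymbol\alpha-\lambda\mathbf1]_+.$$ For $\mathcal F\subseteq[p]$ the sub-problems fix $m_k=0$ for $k\notin\mathcal F$: $P^{\mathcal F}_\lambda(\mathbf m_{\mathcal F})$ is $P_\lambda$ with $\mathbf m$, $\mathbf c_{il}$, $\mathbf c_{ij}$ replaced by their sub-vectors indexed by $\mathcal F$ (minimized over $\mathbf m_{\mathcal F}\ge\mathbf0$), and $$D^{\mathcal F}_\lambda(\boldsymbol\alpha)=-\frac14\|\boldsymbol\alpha\|_2^2+\mathbf t^\top\boldsymbol\alpha-\frac{\lambda\eta}2\|\mathbf m_\lambda(\boldsymbol\alpha)_{\mathcal F}\|_2^2$$ (maximized over $\boldsymbol\alpha\ge\mathbf0$). *)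

From HB Require Import structures.
From mathcomp Require Import all_boot all_order all_algebra.
From mathcomp Require Import reals.
Set Implicit Arguments. Unset Strict Implicit. Unset Printing Implicit Defensive.
Import Order.TTheory GRing.Theory Num.Theory.
Local Open Scope ring_scope.

(* Index of a pair: (b, i, j) with b = true for a different-class pair
   (j \in D i) and b = false for a same-class pair (j \in S i). *)
Definition valid_pair (n : nat) (D S : 'I_n -> {set 'I_n})
  (u : bool * 'I_n * 'I_n) : bool :=
  let: (b, i, j) := u in if b then j \in D i else j \in S i.

(* The index set of R^{2nK}: all valid pairs. *)
Definition pidx (n : nat) (D S : 'I_n -> {set 'I_n}) : finType :=
  {u : bool * 'I_n * 'I_n | valid_pair D S u}.

Definition cvec (R : realType) (n p : nat) (x : 'I_n -> 'I_p -> R)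
  (i j : 'I_n) (k : 'I_p) : R := (x i k - x j k) ^+ 2.

Definition Cmat (R : realType) (n p : nat) (x : 'I_n -> 'I_p -> R)
  (D S : 'I_n -> {set 'I_n}) (k : 'I_p) (u : pidx D S) : R :=
  let: (b, i, j) := val u in if b then cvec x i j k else - cvec x i j k.

Definition tvec (R : realType) (n : nat) (D S : 'I_n -> {set 'I_n})
  (L U : R) (u : pidx D S) : R :=
  let: (b, _, _) := val u in if b then L else - U.

Definition Calpha (R : realType) (n p : nat) (x : 'I_n -> 'I_p -> R)
  (D S : 'I_n -> {set 'I_n}) (a : pidx D S -> R) (k : 'I_p) : R :=
  \sum_(u : pidx D S) Cmat x k u * a u.

Definition mlam (R : realType) (n p : nat) (x : 'I_n -> 'I_p -> R)
  (D S : 'I_n -> {set 'I_n}) (lam eta : R) (a : pidx D S -> R) (k : 'I_p) : R :=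
  (lam * eta)^-1 * Num.max (Calpha x a k - lam) 0.

Definition Dual (R : realType) (n p : nat) (x : 'I_n -> 'I_p -> R)
  (D S : 'I_n -> {set 'I_n}) (L U lam eta : R) (a : pidx D S -> R) : R :=
  - (1/4) * (\sum_(u : pidx D S) a u ^+ 2)
  + (\sum_(u : pidx D S) tvec L U u * a u)
  - (lam * eta / 2) * (\sum_(k : 'I_p) mlam x lam eta a k ^+ 2).

Definition DualF (R : realType) (n p : nat) (x : 'I_n -> 'I_p -> R)
  (D S : 'I_n -> {set 'I_n}) (L U lam eta : R) (F : {set 'I_p})
  (a : pidx D S -> R) : R :=
  - (1/4) * (\sum_(u : pidx D S) a u ^+ 2)
  + (\sum_(u : pidx D S) tvec L U u * a u)
  - (lam * eta / 2) * (\sum_(k in F) mlam x lam eta a k ^+ 2).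

Definition is_max_nonneg (R : realType) (I : finType) (f : (I -> R) -> R)
  (a : I -> R) : Prop :=
  (forall u, 0 <= a u) /\ (forall b : I -> R, (forall u, 0 <= b u) -> f b <= f a).

Definition working_set (R : realType) (n p : nat) (x : 'I_n -> 'I_p -> R)
  (D S : 'I_n -> {set 'I_n}) (lam : R) (a : pidx D S -> R) : {set 'I_p} :=
  [set k | lam < Calpha x a k].

From HB Require Import structures.
From mathcomp Require Import all_boot all_order all_algebra.
From mathcomp Require Import reals.
From mathcomp Require Import ring lra.
From Stdlib Require Import FunctionalExtensionality.
Import Order.TTheory GRing.Theory Num.Theory.
Set Implicit Arguments. Unset Strict Implicit. Unset Printing Implicit Defensive.
Local Open Scope ring_scope.

(* Each sub-problem objective has the form D^F = f - c * sum_(k in F) phi_k^2,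
   with f strongly concave and phi = m_lambda nonnegative and convex, and the
   working set of alpha is exactly the support of phi(alpha).  If alpha
   maximizes D^W, it still maximizes D^(W :&: supp phi(alpha)), because the
   dropped coordinates only contribute at second order along segments from
   alpha; shrinking the penalized set can only increase D^F, so the optimal
   values v_t of successive sub-problems are nonincreasing, and by strict
   concavity v_(t+1) = v_t forces alpha^(t+2) = alpha^(t+1), which then
   maximizes D itself.  Some working set must repeat, which forces a repeated
   optimal value and hence this stall. *)

Lemma sqr_convex (R : realFieldType) (s x y : R) : 0 <= s <= 1 ->
  ((1 - s) * x + s * y) ^+ 2 <= (1 - s) * x ^+ 2 + s * y ^+ 2.
Proof.
move=> /andP[s0 s1]; rewrite -subr_ge0.
have -> : (1 - s) * x ^+ 2 + s * y ^+ 2 - ((1 - s) * x + s * y) ^+ 2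
          = s * (1 - s) * (x - y) ^+ 2 by ring.
by rewrite mulr_ge0 ?sqr_ge0 // mulr_ge0 // subr_ge0.
Qed.

Lemma max0_convex (R : realDomainType) (s x y : R) : 0 <= s <= 1 ->
  Num.max ((1 - s) * x + s * y) 0 <= (1 - s) * Num.max x 0 + s * Num.max y 0.
Proof.
move=> /andP[s0 s1]; have s1' : 0 <= 1 - s by rewrite subr_ge0.
rewrite ge_max; apply/andP; split.
  by rewrite lerD // ler_wpM2l // le_max lexx.
by rewrite addr_ge0 // mulr_ge0 // le_max lexx orbT.
Qed.

Lemma le0_of_forall_le_scaled (R : realFieldType) (d k : R) : 0 <= k ->
  (forall s, 0 < s <= 1 -> d <= s * k) -> d <= 0.
Proof.
move=> k0 small; rewrite leNgt; apply/negP => d0.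
have dk0 : 0 < d + k by rewrite ltr_wpDr.
have := small (d / (d + k)).
rewrite divr_gt0 // ler_pdivrMr // mul1r lerDl k0 => /(_ isT).
rewrite -(ler_pM2r dk0) mulrAC divfK ?gt_eqF // mulrDr.
by rewrite gerDr leNgt mulr_gt0.
Qed.

Lemma finite_seq_repeats (T : finType) (w : nat -> T) :
  exists i j, (i < j)%N /\ w i = w j.
Proof.
pose w' (i : 'I_#|T|.+1) := w i.
have /injectivePn[i [j ij eq_w]] : ~~ injectiveb w'.
  apply/injectiveP => /leq_card; by rewrite card_ord ltnn.
case: (ltngtP i j) => [lt_ij | lt_ji | /val_inj eq_ij].
- by exists i, j.
- by exists j, i.
- by rewrite eq_ij eqxx in ij.
Qed.

Section ConvexCombination.
Variables (R : realType) (I : finType).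

Definition convcomb (s : R) (a b : I -> R) : I -> R :=
  fun u => (1 - s) * a u + s * b u.

Lemma convcomb_ge0 s a b : 0 <= s <= 1 ->
  (forall u, 0 <= a u) -> (forall u, 0 <= b u) -> forall u, 0 <= convcomb s a b u.
Proof.
by move=> /andP[s0 s1] a0 b0 u; rewrite addr_ge0 // mulr_ge0 // subr_ge0.
Qed.

End ConvexCombination.

Section PenalizedObjective.
Variables (R : realType) (I J : finType).
Variables (f : (I -> R) -> R) (mu c : R) (phi : (I -> R) -> J -> R).
Hypothesis mu_gt0 : 0 < mu.
Hypothesis c_ge0 : 0 <= c.
Hypothesis f_strongly_concave : forall s a b, 0 <= s <= 1 ->
  (1 - s) * f a + s * f b + s * (1 - s) * mu * \sum_u (a u - b u) ^+ 2
  <= f (convcomb s a b).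
Hypothesis phi_ge0 : forall a k, 0 <= phi a k.
Hypothesis phi_convex : forall k s a b, 0 <= s <= 1 ->
  phi (convcomb s a b) k <= (1 - s) * phi a k + s * phi b k.

Definition penalized (F : {set J}) (a : I -> R) : R :=
  f a - c * \sum_(k in F) phi a k ^+ 2.

Definition active (a : I -> R) : {set J} := [set k | phi a k != 0].

Lemma penalized_strongly_concave F s a b : 0 <= s <= 1 ->
  (1 - s) * penalized F a + s * penalized F b
    + s * (1 - s) * mu * \sum_u (a u - b u) ^+ 2
  <= penalized F (convcomb s a b).
Proof.
move=> s01; have /andP[s0 s1] := s01.
have pen_convex : \sum_(k in F) phi (convcomb s a b) k ^+ 2
    <= (1 - s) * \sum_(k in F) phi a k ^+ 2 + s * \sum_(k in F) phi b k ^+ 2.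
  rewrite !mulr_sumr -big_split /=; apply: ler_sum => k _.
  apply: le_trans (sqr_convex _ _ s01).
  by rewrite ler_sqr ?nnegrE ?phi_convex ?addr_ge0 ?mulr_ge0 ?subr_ge0.
have := ler_wpM2l c_ge0 pen_convex; have := f_strongly_concave a b s01.
rewrite /penalized; nra.
Qed.

Lemma penalized_subset (F1 F2 : {set J}) a :
  F1 \subset F2 -> penalized F2 a <= penalized F1 a.
Proof.
move=> sF12; rewrite /penalized (big_setID F1) (setIidPr sF12) /=.
by rewrite lerB // ler_wpM2l // lerDl sumr_ge0 // => k _; rewrite sqr_ge0.
Qed.

Lemma penalized_setI_active F a : penalized (F :&: active a) a = penalized F a.
Proof.
rewrite /penalized [in RHS](big_setID (active a)) /=.
rewrite [\sum_(k in F :\: _) _]big1 ?addr0 //.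
by move=> k; rewrite !inE negbK => /andP[/eqP-> _]; rewrite expr0n.
Qed.

Lemma is_max_penalized_unique F a b :
  is_max_nonneg (penalized F) a -> is_max_nonneg (penalized F) b -> a = b.
Proof.
move=> [a0 amax] [b0 bmax].
have half : 0 <= (2^-1 : R) <= 1 by lra.
have mid := le_trans (penalized_strongly_concave F a b half)
                     (amax _ (convcomb_ge0 half a0 b0)).
have ab := amax b b0; have ba := bmax a a0.
set Z := \sum_u (a u - b u) ^+ 2 in mid.
have Z0 : Z = 0.
  apply/le_anti; rewrite sumr_ge0 ?andbT => [|u _]; last by rewrite sqr_ge0.
  rewrite -(pmulr_rle0 _ mu_gt0); lra.
apply: functional_extensionality => u; apply/eqP; rewrite -subr_eq0 -sqrf_eq0.
by apply/eqP; apply: (psumr_eq0P (fun u _ => sqr_ge0 (a u - b u)) Z0).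
Qed.

(* Coordinates outside the support of phi(a) enter penalized W only at
   second order along the segment from a, so they cannot matter at a
   maximizer. *)
Lemma is_max_penalized_setI_active W a :
  is_max_nonneg (penalized W) a -> is_max_nonneg (penalized (W :&: active a)) a.
Proof.
move=> [a0 amax]; split => // b b0.
set G := W :&: active a; set M := \sum_(k in W :\: active a) phi b k ^+ 2.
have M0 : 0 <= M by rewrite sumr_ge0 // => k _; rewrite sqr_ge0.
rewrite -subr_le0; apply: (le0_of_forall_le_scaled (mulr_ge0 c_ge0 M0)).
move=> s /andP[s_gt0 s1]; have s01 : 0 <= s <= 1 by rewrite ltW.
set m := convcomb s a b.
have split_m : penalized W m
    = penalized G m - c * \sum_(k in W :\: active a) phi m k ^+ 2.
  by rewrite /penalized (big_setID (active a)) /=; ring.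
have inactive_small : \sum_(k in W :\: active a) phi m k ^+ 2 <= s ^+ 2 * M.
  rewrite /M mulr_sumr; apply: ler_sum => k; rewrite !inE negbK => /andP[/eqP phi_a0 _].
  have := phi_convex k a b s01; rewrite phi_a0 mulr0 add0r => le_m.
  by rewrite -exprMn ler_sqr ?nnegrE ?mulr_ge0 ?phi_ge0 ?(ltW s_gt0).
have le_inactive := ler_wpM2l c_ge0 inactive_small.
have le_a := amax m (convcomb_ge0 s01 a0 b0).
rewrite split_m -(penalized_setI_active W a) -/G in le_a.
have conc := penalized_strongly_concave G a b s01.
have gap : 0 <= s * (1 - s) * mu * \sum_u (a u - b u) ^+ 2.
  rewrite !mulr_ge0 ?subr_ge0 ?sumr_ge0 ?(ltW s_gt0) ?(ltW mu_gt0) //.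
  by move=> u _; rewrite sqr_ge0.
have key : s * (penalized G b - penalized G a) <= s * (s * (c * M)) by lra.
by rewrite ler_pM2l in key.
Qed.

Lemma is_max_penalized_active_step W a b :
  is_max_nonneg (penalized W) a -> is_max_nonneg (penalized (active a)) b ->
  penalized (active a) b <= penalized W a /\
  (penalized (active a) b = penalized W a -> b = a).
Proof.
move=> amax [b0 bmax]; have [a0 _] := amax.
have [_ Gmax] := is_max_penalized_setI_active amax.
have le_b : penalized (active a) b <= penalized (W :&: active a) b.
  by apply: penalized_subset; rewrite subsetIr.
have eq_a := penalized_setI_active W a.
split=> [|eq_val]; first by rewrite -eq_a (le_trans le_b (Gmax b b0)).
apply: (@is_max_penalized_unique (W :&: active a)); last by split.
split=> // d d0; apply: le_trans (Gmax d d0) _.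
by rewrite eq_a -eq_val.
Qed.

Lemma is_max_full_of_active a :
  is_max_nonneg (penalized (active a)) a ->
  is_max_nonneg (fun b => f b - c * \sum_k phi b k ^+ 2) a.
Proof.
move=> [a0 amax]; split=> // b b0.
have full d : f d - c * \sum_k phi d k ^+ 2 = penalized [set: J] d.
  by rewrite /penalized; congr (_ - _ * _); apply: eq_bigl => k; rewrite in_setT.
rewrite !full -(penalized_setI_active [set: J] a) setTI.
apply: le_trans (amax b b0); apply: penalized_subset; exact: subsetT.
Qed.

Theorem working_set_method_terminates (alpha : nat -> I -> R) :
  (forall t, is_max_nonneg (penalized (active (alpha t))) (alpha t.+1)) ->
  exists T, is_max_nonneg (fun b => f b - c * \sum_k phi b k ^+ 2) (alpha T).
Proof.
move=> step.
pose v t := penalized (active (alpha t)) (alpha t.+1).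
have v_step t := is_max_penalized_active_step (step t) (step t.+1).
have v_nonincr : {homo v : i j / (i <= j)%N >-> j <= i}.
  apply: (homo_leq (r := fun x y => y <= x)) => [x|y x z xy yz|t]; first exact: lexx.
    exact: le_trans yz xy.
  exact: (v_step t).1.
have [i [j [lt_ij /= eq_w]]] := finite_seq_repeats (fun t => active (alpha t)).
have eq_next : alpha i.+1 = alpha j.+1.
  by apply: (is_max_penalized_unique (step i)); rewrite eq_w; exact: step.
have stall : alpha i.+2 = alpha i.+1.
  apply: (v_step i).2; apply/eqP; rewrite eq_le (v_step i).1 /=.
  have -> : penalized (active (alpha i)) (alpha i.+1) = v j by rewrite /v eq_w eq_next.
  exact: v_nonincr.
exists i.+1; apply: is_max_full_of_active.
by have := step i.+1; rewrite stall.
Qed.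

End PenalizedObjective.

Section SubProblemDual.
Variables (R : realType) (n p : nat) (x : 'I_n -> 'I_p -> R).
Variables (D S : 'I_n -> {set 'I_n}) (L U lam eta : R).
Hypotheses (lam_gt0 : 0 < lam) (eta_gt0 : 0 < eta).

Definition dual_quadratic (a : pidx D S -> R) : R :=
  - (1/4) * (\sum_u a u ^+ 2) + \sum_u tvec L U u * a u.

Lemma dual_quadratic_convcomb s a b :
  dual_quadratic (convcomb s a b)
  = (1 - s) * dual_quadratic a + s * dual_quadratic b
    + s * (1 - s) * (1/4) * \sum_u (a u - b u) ^+ 2.
Proof.
have sum_form d : dual_quadratic d = \sum_u (- (1/4) * d u ^+ 2 + tvec L U u * d u).
  by rewrite /dual_quadratic big_split /= mulr_sumr.
rewrite !sum_form !mulr_sumr -!big_split /=.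
by apply: eq_bigr => u _; rewrite /convcomb; ring.
Qed.

Lemma Calpha_convcomb s (a b : pidx D S -> R) k :
  Calpha x (convcomb s a b) k = (1 - s) * Calpha x a k + s * Calpha x b k.
Proof.
rewrite /Calpha !mulr_sumr -big_split /=.
by apply: eq_bigr => u _; rewrite /convcomb; ring.
Qed.

Lemma mlam_ge0 (a : pidx D S -> R) k : 0 <= mlam x lam eta a k.
Proof. by rewrite /mlam mulr_ge0 ?le_max ?lexx ?orbT // invr_ge0 mulr_ge0 // ltW. Qed.

Lemma mlam_convex k s (a b : pidx D S -> R) : 0 <= s <= 1 ->
  mlam x lam eta (convcomb s a b) k
  <= (1 - s) * mlam x lam eta a k + s * mlam x lam eta b k.
Proof.
move=> s01; rewrite /mlam Calpha_convcomb mulrCA [s * (_ * _)]mulrCA -mulrDr.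
rewrite ler_pM2l ?invr_gt0 ?mulr_gt0 //.
have -> : (1 - s) * Calpha x a k + s * Calpha x b k - lam
          = (1 - s) * (Calpha x a k - lam) + s * (Calpha x b k - lam) by ring.
exact: max0_convex.
Qed.

Lemma working_set_active (a : pidx D S -> R) :
  working_set x lam a = active (mlam x lam eta) a.
Proof.
apply/setP => k; rewrite !inE /mlam mulf_eq0 invr_eq0 mulf_eq0.
rewrite (gt_eqF lam_gt0) (gt_eqF eta_gt0) /=.
case: (ltP lam (Calpha x a k)) => [lt_lam | le_lam].
  by rewrite max_l ?subr_ge0 ?(ltW lt_lam) // subr_eq0 gt_eqF.
by rewrite max_r ?subr_le0 // eqxx.
Qed.

End SubProblemDual.

Theorem theorem9 (R : realType) (n K p : nat)
  (x : 'I_n -> 'I_p -> R) (D S : 'I_n -> {set 'I_n}) (L U eta lam : R)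
  (hn : (1 <= n)%N) (hK : (1 <= K)%N) (hp : (1 <= p)%N)
  (hx : forall i k, 0 <= x i k)
  (hD : forall i, #|D i| = K) (hS : forall i, #|S i| = K)
  (hLU : U <= L) (hU : 0 <= U) (heta : 0 < eta) (hlam : 0 < lam)
  (alpha : nat -> pidx D S -> R)
  (h0 : forall u, 0 <= alpha 0%N u)
  (hstep : forall t : nat,
     is_max_nonneg (DualF x L U lam eta (working_set x lam (alpha t)))
                   (alpha t.+1)) :
  exists T : nat, is_max_nonneg (Dual x L U lam eta) (alpha T).
Proof.
have c_ge0 : 0 <= lam * eta / 2 by rewrite divr_ge0 // mulr_ge0 // ltW.
have mu_gt0 : 0 < 1 / 4 :> R by rewrite divr_gt0.
apply: (working_set_method_terminates (f := dual_quadratic L U) (mu := 1 / 4)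
          (c := lam * eta / 2) (phi := mlam x lam eta)) => //.
- by move=> s a b _; rewrite dual_quadratic_convcomb.
- by move=> a k; exact: mlam_ge0.
- by move=> k s a b; exact: mlam_convex.
- by move=> t; rewrite -working_set_active //; exact: hstep.
Qed.
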